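(* Let $g$, $h$, $(\delta_\varepsilon)_\varepsilon$ be as below and let $(x_\varepsilon)_\varepsilon\in C^\infty(\mathbb{R}^n\times\mathbb{R}^n\times\mathbb{R},\mathbb{R}^n)^{(0,1]}$ be an asymptotic solution of the initial value problem $(\ast)$. Then $(x_\varepsilon)_\varepsilon$ is uniformly bounded on compact subsets of $\mathbb{R}^n\times\mathbb{R}^n\times\mathbb{R}$, i.e., for every compact $M\subseteq\mathbb{R}^n\times\mathbb{R}^n\times\mathbb{R}$ there exist $C_M>0$ and $\varepsilon_1\in(0,1]$ with $\sup_{M}|x_\varepsilon|\le C_M$ for all $\varepsilon\le\varepsilon_1$.
   Context: $g\in C^\infty(\mathbb{R}^n,\mathbb{R}^n)$, $h\in C^\infty(\mathbb{R},\mathbb{R}^n)$, and $(\delta_\varepsilon)_{\varepsilon\in(0,1]}$ is a net of smooth real functions on $\mathbb{R}$ with $\operatorname{supp}\delta_\varepsilon\subseteq[-\varepsilon,\varepsilon]$ and $\int|\delta_\varepsilon|\le C$ for some $C>0$ and all small $\varepsilon$. The problem $(\ast)$ is: $\ddot x_\varepsilon(t)=g(x_\varepsilon(t))\delta_\varepsilon(t)+h(t)$, $x_\varepsilon(-1)=x_0$, $\dot x_\varepsilon(-1)=\dot x_0$. An asymptotic solution of $(\ast)$ is a net $(x_\varepsilon)_\varepsilon\in C^\infty(\mathbb{R}^n\times\mathbb{R}^n\times\mathbb{R},\mathbb{R}^n)^{(0,1]}$ such that for every compact $K\subseteq\mathbb{R}^{2n}$ there is $\varepsilon_K\in(0,1]$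 with the property that for all $(x_0,\dot x_0)\in K$ and $\varepsilon\le\varepsilon_K$, $t\mapsto x_\varepsilon(x_0,\dot x_0,t)$ solves $(\ast)$ on all of $\mathbb{R}$. *)

From Stdlib Require Import Reals List.
From mathcomp Require Import all_boot.
Open Scope R_scope.

Definition vec (m : nat) := 'I_m -> R.

Definition vnorm {m : nat} (v : vec m) : R :=
  sqrt (\big[Rplus/0]_(i < m) (v i * v i)).
Definition vsub {m : nat} (u v : vec m) : vec m := fun i => u i - v i.

Definition cont_Rm {m : nat} (F : vec m -> R) : Prop :=
  forall x eps, 0 < eps -> exists d, 0 < d /\
    forall y, vnorm (vsub y x) < d -> Rabs (F y - F x) < eps.

Definition upd {m : nat} (x : vec m) (j : 'I_m) (t : R) : vec m :=
  fun i => if i == j then t else x i.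

Fixpoint Ck {m : nat} (k : nat) (F : vec m -> R) : Prop :=
  match k with
  | O => cont_Rm F
  | S k' => cont_Rm F /\ forall j : 'I_m, exists dF : vec m -> R,
       (forall x, derivable_pt_lim (fun t => F (upd x j t)) (x j) (dF x)) /\ Ck k' dF
  end.

Definition smooth_Rm {m : nat} (F : vec m -> R) : Prop := forall k, Ck k F.
Definition smooth_map {m p : nat} (F : vec m -> vec p) : Prop :=
  forall i : 'I_p, smooth_Rm (fun v => F v i).
Definition smooth_R (f : R -> R) : Prop := smooth_Rm (fun v : vec 1 => f (v ord0)).

(* identification R^n x R^n = R^(n+n) and R^n x R^n x R = R^(n+n+1) *)
Definition q1 {n : nat} (w : vec (n + n)) : vec n := fun i => w (lshift n i).
Definition q2 {n : nat} (w : vec (n + n)) : vec n := fun i => w (rshift n i).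
Definition p1 {n : nat} (w : vec (n + n + 1)) : vec n :=
  fun i => w (lshift 1 (lshift n i)).
Definition p2 {n : nat} (w : vec (n + n + 1)) : vec n :=
  fun i => w (lshift 1 (rshift n i)).
Definition p3 {n : nat} (w : vec (n + n + 1)) : R := w (rshift (n + n) ord0).

Definition open_Rm {m : nat} (U : vec m -> Prop) : Prop :=
  forall x, U x -> exists r, 0 < r /\ forall y, vnorm (vsub y x) < r -> U y.
Definition compact_Rm {m : nat} (K : vec m -> Prop) : Prop :=
  forall (I : Type) (U : I -> vec m -> Prop),
    (forall i, open_Rm (U i)) ->
    (forall x, K x -> exists i, U i x) ->
    exists l : list I, forall x, K x -> exists i, List.In i l /\ U i x.

Definition solves_ivp {n : nat} (g : vec n -> vec n) (h : R -> vec n) (d : R -> R)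
  (x0 v0 : vec n) (x : R -> vec n) : Prop :=
  exists v : R -> vec n,
    (forall t i, derivable_pt_lim (fun s => x s i) t (v t i) /\
                 derivable_pt_lim (fun s => v s i) t (g (x t) i * d t + h t i)) /\
    (forall i, x (-1) i = x0 i) /\ (forall i, v (-1) i = v0 i).

(* asymptotic solution: the net (x_eps), eps in (0,1], of smooth maps
   R^n x R^n x R -> R^n, solving the IVP eventually, locally uniformly in
   the initial data *)
Definition asymptotic_solution {n : nat} (g : vec n -> vec n) (h : R -> vec n)
  (delta : R -> R -> R) (x : R -> vec n -> vec n -> R -> vec n) : Prop :=
  (forall eps, 0 < eps <= 1 ->
     smooth_map (fun w : vec (n + n + 1) => x eps (p1 w) (p2 w) (p3 w))) /\
  forall K : vec n -> vec n -> Prop,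
    compact_Rm (fun w : vec (n + n) => K (q1 w) (q2 w)) ->
    exists epsK, 0 < epsK <= 1 /\
      forall x0 v0 eps, K x0 v0 -> 0 < eps <= epsK ->
        solves_ivp g h (delta eps) x0 v0 (x eps x0 v0).

(* Outside [-eps, eps] the impulse delta_eps vanishes, so there the solution
   moves under the bounded force h alone: its speed and position grow at most
   linearly, with bounds that depend only on the initial data.  During the kick
   the velocity changes by at most sup |g| * C + O(eps), but only as long as x
   stays in a fixed ball on which g is bounded; a continuity argument shows
   that for small eps the solution, moving at bounded speed for a time 2 eps,
   never leaves that ball.  Compactness of cubes (by bisection) bounds g on the
   ball and yields the compact set of initial data on which the asymptotic
   solution solves the problem. *)

From HB Require Import structures.
From Stdlib Require Import Reals List Lra Lia Classical ClassicalEpsilon FunctionalExtensionality.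
From mathcomp Require Import all_boot.
Open Scope R_scope.

Lemma RplusA : associative Rplus. Proof. by move=> a b c; ring. Qed.
HB.instance Definition _ := Monoid.isComLaw.Build R 0 Rplus RplusA Rplus_comm Rplus_0_l.

Section FiniteBounds.
Context {J : finType}.

Lemma fin_upper_bound (P : R -> J -> Prop) :
  (forall a b j, a <= b -> P a j -> P b j) -> (forall j, exists a, P a j) ->
  exists a, 0 <= a /\ forall j, P a j.
Proof.
move=> Pmono Pex.
suff [a [a_ge0 Ha]] : exists a, 0 <= a /\ forall j, j \in enum J -> P a j.
  by exists a; split => // j; apply: Ha; rewrite mem_enum.
elim: (enum J) => [|j0 s [a [a_ge0 Ha]]]; first by exists 0; split => //; lra.
have [b Hb] := Pex j0.
exists (Rmax a b); split => [|j]; first exact: Rle_trans a_ge0 (Rmax_l a b).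
rewrite in_cons => /orP [/eqP -> | Hj].
- exact: Pmono (Rmax_r a b) Hb.
- exact: Pmono (Rmax_l a b) (Ha j Hj).
Qed.

Lemma fin_pos_lower_bound (P : R -> J -> Prop) :
  (forall a b j, 0 < a -> a <= b -> P b j -> P a j) ->
  (forall j, exists a, 0 < a /\ P a j) -> exists a, 0 < a /\ forall j, P a j.
Proof.
move=> Pmono Pex.
suff [a [Ha0 Ha]] : exists a, 0 < a /\ forall j, j \in enum J -> P a j.
  by exists a; split => // j; apply: Ha; rewrite mem_enum.
elim: (enum J) => [|j0 s [a [Ha0 Ha]]]; first by exists 1; split => //; lra.
have [b [Hb0 Hb]] := Pex j0.
have Hab : 0 < Rmin a b by apply: Rmin_glb_lt.
exists (Rmin a b); split => // j; rewrite in_cons => /orP [/eqP -> | Hj].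
- exact: Pmono Hab (Rmin_r a b) Hb.
- exact: Pmono Hab (Rmin_l a b) (Ha j Hj).
Qed.

End FiniteBounds.

Lemma Rabs_le_inv {a b : R} : Rabs a <= b -> - b <= a <= b.
Proof. by have := Rle_abs a; have := Rle_abs (- a); rewrite Rabs_Ropp; lra. Qed.

Lemma sumR_ge0 {m : nat} (P : pred 'I_m) (F : 'I_m -> R) :
  (forall i, 0 <= F i) -> 0 <= \big[Rplus/0]_(i < m | P i) F i.
Proof. by move=> F_ge0; apply: (big_ind (fun x => 0 <= x)) => // [|a b]; lra. Qed.

Lemma coord_le_vnorm {m : nat} (v : vec m) (j : 'I_m) : Rabs (v j) <= vnorm v.
Proof.
rewrite /vnorm (bigD1 j) //= -sqrt_Rsqr_abs; apply: sqrt_le_1_alt.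
rewrite -[X in X <= _]Rplus_0_r; apply: Rplus_le_compat_l.
by apply: sumR_ge0 => i; exact: Rle_0_sqr.
Qed.

Lemma sumR_const (m : nat) (c : R) : \big[Rplus/0]_(i < m) c = INR m * c.
Proof.
rewrite big_const_ord; elim: m => [|m IH]; first by rewrite /=; lra.
by rewrite iterS IH S_INR; lra.
Qed.

Lemma vnorm_le_sup {m : nat} (y : vec m) (r : R) :
  0 <= r -> (forall j, Rabs (y j) <= r) -> vnorm y <= (INR m + 1) * r.
Proof.
move=> r_ge0 y_le; have := pos_INR m => m_ge0.
rewrite -(sqrt_square ((INR m + 1) * r)); last by nra.
apply: sqrt_le_1_alt; apply: (Rle_trans _ (INR m * (r * r))); last by nra.
rewrite -sumR_const; apply: (big_ind2 (fun a b => a <= b)) => [|a b a' b'|i _]; try lra.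
by have := Rabs_le_inv (y_le i); nra.
Qed.

Lemma cont_Rm_coord {m : nat} (j : 'I_m) : cont_Rm (fun y : vec m => y j).
Proof.
move=> x e e_gt0; exists e; split => // y; apply: Rle_lt_trans.
exact: (coord_le_vnorm (vsub y x) j).
Qed.

Definition finite_subcover {m : nat} {I : Type} (U : I -> vec m -> Prop)
  (S : vec m -> Prop) : Prop :=
  exists l : list I, forall y, S y -> exists i, In i l /\ U i y.

Lemma compact_Rm_ext {m : nat} (S S' : vec m -> Prop) :
  (forall y, S y <-> S' y) -> compact_Rm S -> compact_Rm S'.
Proof.
move=> SS' S_compact I U U_open U_cover.
have [l Hl] := S_compact I U U_open (fun y Sy => U_cover y (proj1 (SS' y) Sy)).
by exists l => y /SS' /Hl.
Qed.

Lemma in_le_sum (l : list nat) (k : nat) : In k l -> (k <= fold_right Nat.add 0%nat l)%coq_nat.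
Proof. by elim: l => [|a l IH] //= [->|/IH]; lia. Qed.

Lemma compact_cont_bounded {m : nat} (S : vec m -> Prop) (F : vec m -> R) :
  compact_Rm S -> cont_Rm F -> exists B, forall y, S y -> Rabs (F y) <= B.
Proof.
move=> S_compact F_cont.
have [l Hl] : finite_subcover (fun (k : nat) y => Rabs (F y) < INR k) S.
  apply: S_compact => [k y Fy_lt | y _].
  - have [r [r_gt0 Hr]] := F_cont y (INR k - Rabs (F y)) ltac:(lra).
    exists r; split => // z /Hr; have := Rabs_triang_inv (F z) (F y); lra.
  - by have [k Hk] := INR_unbounded (Rabs (F y)); exists k; lra.
exists (INR (fold_right Nat.add 0%nat l)) => y /Hl [k [/in_le_sum/le_INR k_le Fy_lt]]; lra.
Qed.

Lemma compact_map_bounded {m p : nat} (S : vec m -> Prop) (F : vec m -> vec p) :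
  compact_Rm S -> (forall i, cont_Rm (fun y => F y i)) ->
  exists B, 0 <= B /\ forall i y, S y -> Rabs (F y i) <= B.
Proof.
move=> S_compact F_cont.
apply: fin_upper_bound => [a b i ab Ha y /Ha | i]; first lra.
exact: compact_cont_bounded S_compact (F_cont i).
Qed.

Definition cube {m : nat} (a : vec m) (s : R) (y : vec m) : Prop :=
  forall j, a j <= y j <= a j + s.

Definition subcube_corner {m : nat} (a : vec m) (s : R) (sigma : {ffun 'I_m -> bool}) : vec m :=
  fun j => if sigma j then a j + s / 2 else a j.

Lemma cube_subcubes {m : nat} (a : vec m) (s : R) (y : vec m) :
  cube a s y -> exists sigma, cube (subcube_corner a s sigma) (s / 2) y.
Proof.
move=> Hy; exists [ffun j => if Rle_dec (a j + s / 2) (y j) then true else false] => j.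
by rewrite /subcube_corner ffunE; have := Hy j; case: Rle_dec => /= ? ?; lra.
Qed.

Lemma finite_subcover_fin_union {m : nat} {I : Type} {J : finType}
  (U : I -> vec m -> Prop) (S : J -> vec m -> Prop) :
  (forall k, finite_subcover U (S k)) -> finite_subcover U (fun y => exists k, S k y).
Proof.
move=> S_covered.
suff [l Hl] : finite_subcover U (fun y => exists2 k, k \in enum J & S k y).
  by exists l => y [k Sy]; apply: Hl; exists k; rewrite ?mem_enum.
elim: (enum J) => [|k s [l Hl]]; first by exists nil => y [].
have [l' Hl'] := S_covered k.
exists (l' ++ l) => y [k']; rewrite in_cons => /orP [/eqP -> /Hl' | k's Sy].
- by move=> [i [il' Ui]]; exists i; split => //; apply: in_or_app; left.
- have [i [il Ui]] := Hl y (ex_intro2 _ _ k' k's Sy).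
  by exists i; split => //; apply: in_or_app; right.
Qed.

Section HeineBorel.
Variables (m : nat) (I : Type) (U : I -> vec m -> Prop).
Hypothesis U_open : forall i, open_Rm (U i).

Let uncovered (a : vec m) (s : R) : Prop := ~ finite_subcover U (cube a s).

Lemma uncovered_subcube a s :
  uncovered a s -> exists sigma, uncovered (subcube_corner a s sigma) (s / 2).
Proof.
move=> a_unc; apply: NNPP => all_covered; apply: a_unc.
have [l Hl] := finite_subcover_fin_union U (fun sigma => cube (subcube_corner a s sigma) (s / 2))
  (fun sigma => NNPP _ (fun H => all_covered (ex_intro _ sigma H))).
by exists l => y /cube_subcubes /Hl.
Qed.

Variables (a0 : vec m) (s0 : R).
Hypothesis s0_ge0 : 0 <= s0.
Hypothesis a0_uncovered : uncovered a0 s0.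
Hypothesis U_cover : forall y, cube a0 s0 y -> exists i, U i y.

Let side (k : nat) : R := s0 * (/ 2) ^ k.

Let halve (a : vec m) (s : R) : vec m :=
  subcube_corner a s (epsilon (inhabits [ffun=> false])
    (fun sigma => uncovered (subcube_corner a s sigma) (s / 2))).

Fixpoint bisection_corner (k : nat) : vec m :=
  if k is k'.+1 then halve (bisection_corner k') (side k') else a0.

Let side_ge0 k : 0 <= side k.
Proof. by apply: Rmult_le_pos => //; apply: pow_le; lra. Qed.

Let side_S k : side k.+1 = side k / 2.
Proof. by rewrite /side /=; field. Qed.

Lemma bisection_uncovered k : uncovered (bisection_corner k) (side k).
Proof.
elim: k => [|k IH]; first by rewrite /side /= Rmult_1_r.
by rewrite side_S /= /halve; exact: (epsilon_spec _ _ (uncovered_subcube _ _ IH)).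
Qed.

Lemma bisection_nested k p j : (k <= p)%N ->
  bisection_corner k j <= bisection_corner p j /\
  bisection_corner p j + side p <= bisection_corner k j + side k.
Proof.
elim: p => [|p IH]; first by rewrite leqn0 => /eqP ->; lra.
rewrite leq_eqVlt ltnS => /orP [/eqP <-|/IH]; first lra.
have := side_ge0 p; rewrite /= side_S /halve /subcube_corner.
by case: ifP; lra.
Qed.

Lemma bisection_limit : exists z, forall k, cube (bisection_corner k) (side k) z.
Proof.
have lub j : exists zj, is_lub (fun r => exists k, r = bisection_corner k j) zj.
  have bounded : bound (fun r => exists k, r = bisection_corner k j).
    exists (a0 j + s0) => _ [k ->]; have := @bisection_nested 0 k j (leq0n k).
    by have := side_ge0 k; rewrite /side /= Rmult_1_r; lra.
  have [zj Hzj] := completeness _ bounded (ex_intro _ (a0 j) (ex_intro _ 0%N erefl)).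
  by exists zj.
have [z Hz] := fin_all_exists lub.
exists z => k j; have [z_ub z_lub] := Hz j; split; first by apply: z_ub; exists k.
apply: z_lub => _ [p ->]; case: (leqP k p) => [/(@bisection_nested k p j) | /ltnW/(@bisection_nested p k j)].
- by have := side_ge0 p; lra.
- by have := side_ge0 k; lra.
Qed.

Lemma bisection_absurd : False.
Proof.
have [z z_in] := bisection_limit.
have [i Ui] : exists i, U i z by apply: U_cover; have := z_in 0%N; rewrite /side /= Rmult_1_r.
have [r [r_gt0 Hr]] := U_open i z Ui.
have P_gt0 : 0 < (INR m + 1) * (s0 + 1) by have := pos_INR m; nra.
have [k Hk] := pow_lt_1_zero (/ 2) ltac:(rewrite Rabs_pos_eq; lra)
  (r / ((INR m + 1) * (s0 + 1))) ltac:(exact: Rdiv_lt_0_compat).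
have side_small : (INR m + 1) * side k < r.
  have := Hk k (le_n k); rewrite Rabs_pos_eq; last by apply: pow_le; lra.
  move=> /(Rmult_lt_compat_l _ _ _ P_gt0).
  rewrite /Rdiv (Rmult_comm r) -Rmult_assoc Rinv_r ?Rmult_1_l; last lra.
  have := pos_INR m; have := pow_le (/ 2) k ltac:(lra); rewrite /side; nra.
apply: (bisection_uncovered k); exists (i :: nil) => y y_in; exists i; split; first by left.
apply: Hr; apply: Rle_lt_trans (vnorm_le_sup _ _ (side_ge0 k) _) side_small => j.
by rewrite /vsub; have := y_in j; have := z_in k j => ? ?; apply: Rabs_le; lra.
Qed.

End HeineBorel.

Theorem cube_compact {m : nat} (a : vec m) (s : R) : 0 <= s -> compact_Rm (cube a s).
Proof.
move=> s_ge0 I U U_open U_cover; apply: NNPP => uncovered.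
exact: (bisection_absurd _ _ _ U_open _ _ s_ge0 uncovered U_cover).
Qed.

Definition sup_ball {m : nat} (r : R) (y : vec m) : Prop := forall j, Rabs (y j) <= r.

Lemma sup_ball_compact {m : nat} (r : R) : 0 <= r -> compact_Rm (@sup_ball m r).
Proof.
move=> r_ge0; apply: (compact_Rm_ext (cube (fun _ => - r) (2 * r))); last first.
  by apply: cube_compact; lra.
move=> y; split => y_in j; have := y_in j.
- by move=> ?; apply: Rabs_le; lra.
- by move=> /Rabs_le_inv; lra.
Qed.

Lemma increment_le_of_deriv_le (f f' F F' : R -> R) (a b : R) : a <= b ->
  (forall c, a <= c <= b -> derivable_pt_lim f c (f' c)) ->
  (forall c, a <= c <= b -> derivable_pt_lim F c (F' c)) ->
  (forall c, a < c < b -> Rabs (f' c) <= F' c) -> Rabs (f b - f a) <= F b - F a.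
Proof.
move=> ab f_deriv F_deriv f'_le.
case: (Req_dec a b) => [<-|a_ne_b]; first by rewrite !Rminus_diag Rabs_R0; lra.
have a_lt_b : a < b by lra.
have [c [Ec c_in]] := MVT_cor2 (fun t => f t - F t) (fun t => f' t - F' t) a b a_lt_b
  (fun c c_in => derivable_pt_lim_minus _ _ _ _ _ (f_deriv c c_in) (F_deriv c c_in)).
have [c' [Ec' c'_in]] := MVT_cor2 (fun t => - f t - F t) (fun t => - f' t - F' t) a b a_lt_b
  (fun c c_in => derivable_pt_lim_minus _ _ _ _ _
     (derivable_pt_lim_opp _ _ _ (f_deriv c c_in)) (F_deriv c c_in)).
have := f'_le c c_in; have := f'_le c' c'_in.
have := Rle_abs (f' c); have := Rle_abs (- f' c'); rewrite Rabs_Ropp => ? ? ? ?.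
apply: Rabs_le; nra.
Qed.

Lemma increment_le_lipschitz (f f' : R -> R) (L s t : R) :
  (forall c, derivable_pt_lim f c (f' c)) ->
  (forall c, s < c < t \/ t < c < s -> Rabs (f' c) <= L) ->
  Rabs (f t - f s) <= L * Rabs (t - s).
Proof.
move=> f_deriv f'_le.
wlog st : s t f'_le / s < t.
  move=> Hwlog; case: (Rtotal_order s t) => [|[<-|ts]]; first exact: Hwlog.
  - by rewrite !Rminus_diag Rabs_R0 Rmult_0_r; lra.
  - rewrite Rabs_minus_sym (Rabs_minus_sym t); apply: Hwlog => // c Hc.
    by apply: f'_le; lra.
have [c [-> c_in]] := MVT_cor2 f f' s t st (fun c _ => f_deriv c).
rewrite Rabs_mult; apply: Rmult_le_compat_r; first exact: Rabs_pos.
by apply: f'_le; left.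
Qed.

Lemma derivable_pt_lim_lincomb (F : R -> R) (a b c l : R) :
  derivable_pt_lim F c l -> derivable_pt_lim (fun t => a * F t + b * t) c (a * l + b).
Proof.
move=> F_deriv; have := derivable_pt_lim_plus _ _ c _ _ (derivable_pt_lim_scal F a c l F_deriv)
  (derivable_pt_lim_scal id b c 1 (derivable_pt_lim_id c)).
by rewrite Rmult_1_r.
Qed.

Lemma continuity_pt_of_deriv (f : R -> R) (c l : R) :
  derivable_pt_lim f c l -> continuity_pt f c.
Proof. by move=> f_deriv; apply: (derivable_continuous_pt f c (exist _ l f_deriv)). Qed.

Lemma continuity_pt_ball (f : R -> R) (x : R) : continuity_pt f x ->
  forall e, 0 < e -> exists d, 0 < d /\ forall y, Rabs (y - x) < d -> Rabs (f y - f x) < e.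
Proof.
move=> f_cont e e_gt0; have [d [d_gt0 Hd]] := f_cont e e_gt0.
exists d; split => // y yx; case: (Req_dec y x) => [->|y_ne_x].
  by rewrite Rminus_diag Rabs_R0.
by apply: (Hd y); split; [split; [constructor | apply: not_eq_sym] | ].
Qed.

Lemma continuous_induction {J : finType} (f : J -> R -> R) (a b L L' : R) :
  L' < L -> (forall j c, continuity_pt (f j) c) ->
  (forall t, a <= t <= b -> (forall c, a <= c < t -> forall j, Rabs (f j c) < L) ->
     forall j, Rabs (f j t) <= L') ->
  forall t, a <= t <= b -> forall j, Rabs (f j t) <= L'.
Proof.
move=> L'L f_cont step t t_in; apply: (step) => // c c_in.
pose good t := a <= t <= b /\ forall c, a <= c < t -> forall j, Rabs (f j c) < L.
have good_a : good a by split => [|c' ?]; lra.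
have [beta [beta_ub beta_lub]] := completeness good
  (ex_intro _ b (fun t' (Ht' : good t') => proj2 (proj1 Ht'))) (ex_intro _ a good_a).
have below c' : a <= c' < beta -> forall j, Rabs (f j c') < L.
  move=> c'_in; apply: NNPP => bad.
  suff : beta <= c' by lra.
  apply: beta_lub => t' [_ good_t']; apply: Rnot_lt_le => c't'.
  by apply: bad; apply: good_t'; lra.
suff : b <= beta by move=> b_le; apply: below; lra.
apply: Rnot_lt_le => beta_lt_b.
have a_le_beta : a <= beta by apply: beta_ub.
have at_beta := step beta ltac:(lra) below.
have [r [r_gt0 Hr]] : exists r, 0 < r /\ forall j c',
    Rabs (c' - beta) < r -> Rabs (f j c' - f j beta) < L - L'.
  apply: fin_pos_lower_bound => [r r' j r_gt0' rr' Hr' c' Hc' | j]; first by apply: Hr'; lra.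
  by apply: continuity_pt_ball; [exact: f_cont | lra].
have step_gt0 : 0 < Rmin (r / 2) (b - beta) by apply: Rmin_glb_lt; lra.
suff : beta + Rmin (r / 2) (b - beta) <= beta by lra.
apply: beta_ub; split; first by have := Rmin_r (r / 2) (b - beta); lra.
move=> c' c'_in j; case: (Rlt_le_dec c' beta) => [c'_lt|beta_le]; first by apply: below; lra.
have : Rabs (c' - beta) < r by rewrite Rabs_pos_eq; have := Rmin_l (r / 2) (b - beta); lra.
move=> /(Hr j); have := at_beta j; have := Rabs_triang_inv (f j c') (f j beta); lra.
Qed.

Section Trajectory.
Context {n : nat} {g : vec n -> vec n} {h : R -> vec n} {d : R -> R}.
Context {x0 v0 : vec n} {X V : R -> vec n}.
Hypothesis X_deriv : forall t i, derivable_pt_lim (fun s => X s i) t (V t i).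
Hypothesis V_deriv :
  forall t i, derivable_pt_lim (fun s => V s i) t (g (X t) i * d t + h t i).
Hypothesis X_init : forall i, X (-1) i = x0 i.
Hypothesis V_init : forall i, V (-1) i = v0 i.

Lemma position_increment (L s t : R) (i : 'I_n) :
  (forall c, s < c < t \/ t < c < s -> Rabs (V c i) <= L) ->
  Rabs (X t i - X s i) <= L * Rabs (t - s).
Proof. exact: increment_le_lipschitz (X_deriv^~ i). Qed.

Lemma velocity_increment_free (Hb s t : R) (i : 'I_n) :
  (forall c, s < c < t \/ t < c < s -> d c = 0 /\ Rabs (h c i) <= Hb) ->
  Rabs (V t i - V s i) <= Hb * Rabs (t - s).
Proof.
move=> free; apply: increment_le_lipschitz (V_deriv^~ i) _ => c /free [-> h_le].
by rewrite Rmult_0_r Rplus_0_l.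
Qed.

Context {eps T R0 Hb : R}.
Hypothesis eps_small : 0 < eps <= 1 / 2.
Hypothesis T_ge1 : 1 <= T.
Hypothesis R0_ge0 : 0 <= R0.
Hypothesis Hb_ge0 : 0 <= Hb.
Hypothesis d_supp : forall t, eps < Rabs t -> d t = 0.
Hypothesis h_bound : forall c, -T <= c <= T -> forall i, Rabs (h c i) <= Hb.
Hypothesis init_bound : forall i, Rabs (x0 i) <= R0 /\ Rabs (v0 i) <= R0.

Let early_speed := R0 + 2 * T * Hb.
Let early_reach := R0 + 2 * T * early_speed.

Let early_speed_ge0 : 0 <= early_speed.
Proof. by rewrite /early_speed; have := Rmult_le_pos (2 * T) Hb ltac:(lra) Hb_ge0; lra. Qed.

Let free c i : eps < Rabs c -> -T <= c <= T -> d c = 0 /\ Rabs (h c i) <= Hb.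
Proof. by move=> c_out c_in; split; [apply: d_supp | apply: h_bound]. Qed.

Let dist_le s t : -T <= s <= T -> -T <= t <= T -> Rabs (t - s) <= 2 * T.
Proof. by move=> s_in t_in; apply: Rabs_le; lra. Qed.

Lemma early_velocity s i : -T <= s <= -eps -> Rabs (V s i) <= early_speed.
Proof.
move=> s_in; have [_ v0_le] := init_bound i.
have incr : Rabs (V s i - V (-1) i) <= Hb * Rabs (s - -1).
  by apply: velocity_increment_free => c c_in; apply: free; [rewrite Rabs_left|]; lra.
rewrite V_init in incr.
have := Rmult_le_compat_l Hb _ _ Hb_ge0 (dist_le (-1) s ltac:(lra) ltac:(lra)).
by have := Rabs_triang_inv (V s i) (v0 i); rewrite /early_speed; lra.
Qed.

Lemma early_position s i : -T <= s <= -eps -> Rabs (X s i) <= early_reach.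
Proof.
move=> s_in; have [x0_le _] := init_bound i.
have incr : Rabs (X s i - X (-1) i) <= early_speed * Rabs (s - -1).
  by apply: position_increment => c c_in; apply: early_velocity; lra.
rewrite X_init in incr.
have := Rmult_le_compat_l early_speed _ _ early_speed_ge0 (dist_le (-1) s ltac:(lra) ltac:(lra)).
by have := Rabs_triang_inv (X s i) (x0 i); rewrite /early_reach; lra.
Qed.

Context {G C : R} {F : R -> R}.
Hypothesis G_ge0 : 0 <= G.
Hypothesis g_bound : forall y, sup_ball (early_reach + 1) y -> forall i, Rabs (g y i) <= G.
Hypothesis F_deriv : forall c, -eps <= c <= eps -> derivable_pt_lim F c (Rabs (d c)).
Hypothesis F_bound : forall c, -eps <= c <= eps -> F c - F (- eps) <= C.

Let kick_speed := early_speed + G * C + Hb.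

Hypothesis kick_small : kick_speed * (2 * eps) <= 1 / 2.

Let kick_speed_ge0 : 0 <= kick_speed.
Proof.
have := F_bound (- eps) ltac:(lra); rewrite Rminus_diag => C_ge0.
by have := Rmult_le_pos G C G_ge0 C_ge0; have := early_speed_ge0; rewrite /kick_speed; lra.
Qed.

Lemma kick_velocity t i : -eps <= t <= eps ->
  (forall c, -eps < c < t -> sup_ball (early_reach + 1) (X c)) -> Rabs (V t i) <= kick_speed.
Proof.
move=> t_in X_near.
have incr := increment_le_of_deriv_le (fun s => V s i) _ (fun s => G * F s + Hb * s)
  (fun c => G * Rabs (d c) + Hb) (-eps) t ltac:(lra) (fun c _ => V_deriv c i)
  (fun c c_in => derivable_pt_lim_lincomb F G Hb c _ (F_deriv c ltac:(lra))).
have {}incr : Rabs (V t i - V (- eps) i) <= G * (F t - F (- eps)) + Hb * (t + eps).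
  apply: Rle_trans (incr _) _ => [c c_in|]; last by apply: Req_le; ring.
  apply: Rle_trans (Rabs_triang _ _) _; rewrite Rabs_mult; apply: Rplus_le_compat.
  - exact: Rmult_le_compat_r (Rabs_pos _) (g_bound _ (X_near c c_in) i).
  - by apply: h_bound; lra.
have := Rmult_le_compat_l G _ _ G_ge0 (F_bound t t_in).
have := Rmult_le_compat_l Hb (t + eps) 1 Hb_ge0 ltac:(lra).
have := early_velocity (- eps) i ltac:(lra).
by have := Rabs_triang_inv (V t i) (V (- eps) i); rewrite /kick_speed; lra.
Qed.

Lemma kick_position t i : -eps <= t <= eps -> Rabs (X t i) <= early_reach + 1 / 2.
Proof.
move=> t_in; apply: (continuous_induction (fun j s => X s j) (-eps) eps (early_reach + 1) (early_reach + 1 / 2)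
  _ _ _ t t_in i) => [|j c|t' t'_in X_lt j]; first lra.
  by apply: continuity_pt_of_deriv (X_deriv c j).
have incr : Rabs (X t' j - X (- eps) j) <= kick_speed * Rabs (t' - - eps).
  apply: position_increment => c c_in; apply: kick_velocity => [|c' c'_in k]; first lra.
  by apply: Rlt_le; apply: X_lt; lra.
rewrite (Rabs_pos_eq (t' - - eps)) in incr; last lra.
have := Rmult_le_compat_l kick_speed (t' - - eps) (2 * eps) kick_speed_ge0 ltac:(lra).
by have := early_position (- eps) j ltac:(lra); have := Rabs_triang_inv (X t' j) (X (- eps) j); lra.
Qed.

Lemma late_velocity s i : eps <= s <= T -> Rabs (V s i) <= kick_speed + 2 * T * Hb.
Proof.
move=> s_in.
have V_eps : Rabs (V eps i) <= kick_speed.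
  apply: kick_velocity => [|c c_in j]; first lra.
  by have := kick_position c j ltac:(lra); lra.
have incr : Rabs (V s i - V eps i) <= Hb * Rabs (s - eps).
  by apply: velocity_increment_free => c c_in; apply: free; [rewrite Rabs_right|]; lra.
have := Rmult_le_compat_l Hb _ _ Hb_ge0 (dist_le eps s ltac:(lra) ltac:(lra)).
by have := Rabs_triang_inv (V s i) (V eps i); lra.
Qed.

Lemma late_position s i : eps <= s <= T ->
  Rabs (X s i) <= early_reach + 1 / 2 + 2 * T * (kick_speed + 2 * T * Hb).
Proof.
move=> s_in.
have incr : Rabs (X s i - X eps i) <= (kick_speed + 2 * T * Hb) * Rabs (s - eps).
  by apply: position_increment => c c_in; apply: late_velocity; lra.
have := Rmult_le_pos (2 * T) Hb ltac:(lra) Hb_ge0 => ?.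
have := Rmult_le_compat_l (kick_speed + 2 * T * Hb) _ _ ltac:(lra) (dist_le eps s ltac:(lra) ltac:(lra)).
have := kick_position eps i ltac:(lra).
by have := Rabs_triang_inv (X s i) (X eps i); lra.
Qed.

Lemma trajectory_bound s i : -T <= s <= T ->
  Rabs (X s i) <= early_reach + 1 + 2 * T * (kick_speed + 2 * T * Hb).
Proof.
move=> s_in.
have := Rmult_le_pos (2 * T) Hb ltac:(lra) Hb_ge0 => HbT.
have := Rmult_le_pos (2 * T) (kick_speed + 2 * T * Hb) ltac:(lra) ltac:(have := kick_speed_ge0; lra).
case: (Rle_lt_dec s (- eps)) => [s_early|s_late].
  by have := early_position s i (conj (proj1 s_in) s_early); lra.
case: (Rle_lt_dec s eps) => [s_kick|s_late'].
- by have := kick_position s i (conj (Rlt_le _ _ s_late) s_kick); lra.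
- by have := late_position s i (conj (Rlt_le _ _ s_late') (proj2 s_in)); lra.
Qed.

End Trajectory.

Lemma abs_primitive (d : R -> R) (eps C : R) : 0 < eps ->
  (forall c, continuity_pt d c) ->
  (forall pr : Riemann_integrable (fun t => Rabs (d t)) (- eps) eps, RiemannInt pr <= C) ->
  exists F, (forall c, -eps <= c <= eps -> derivable_pt_lim F c (Rabs (d c))) /\
    (forall c, -eps <= c <= eps -> F c - F (- eps) <= C).
Proof.
move=> eps_gt0 d_cont d_int.
have ab : -eps <= eps by lra.
have absd_cont c : -eps <= c <= eps -> continuity_pt (fun t => Rabs (d t)) c.
  by move=> _; apply: continuity_pt_comp (d_cont c) (Rcontinuity_abs _).
pose F := primitive ab (FTC_P1 ab absd_cont).
have F_deriv c : -eps <= c <= eps -> derivable_pt_lim F c (Rabs (d c)) by exact: RiemannInt_P28.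
exists F; split => // c c_in.
have F_mono : F c <= F eps.
  case: (Req_dec c eps) => [->|c_ne]; first lra.
  have [c' [E c'_in]] := MVT_cor2 F _ c eps ltac:(lra) (fun c' c'_in => F_deriv c' ltac:(lra)).
  by have := Rabs_pos (d c'); nra.
suff : F eps - F (- eps) <= C by lra.
have pr : Riemann_integrable (fun t => Rabs (d t)) (- eps) eps.
  exact: continuity_implies_RiemannInt ab absd_cont.
by rewrite /F -(RiemannInt_P20 ab _ pr); apply: d_int.
Qed.

Lemma segment_bound {p : nat} (h : R -> vec p) (a b : R) : a <= b ->
  (forall i c, continuity_pt (fun t => h t i) c) ->
  exists Hb, 0 <= Hb /\ forall i c, a <= c <= b -> Rabs (h c i) <= Hb.
Proof.
move=> ab h_cont; apply: fin_upper_bound => [Hb Hb' i le H c /H|i]; first lra.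
have [c_max [Hmax _]] := continuity_ab_maj (fun t => Rabs (h t i)) a b ab
  (fun c _ => continuity_pt_comp _ _ c (h_cont i c) (Rcontinuity_abs _)).
by exists (Rabs (h c_max i)).
Qed.

Lemma vnorm_vec1 (v : vec 1) : vnorm v = Rabs (v ord0).
Proof. by rewrite /vnorm big_ord1 -sqrt_Rsqr_abs. Qed.

Lemma smooth_R_continuous (f : R -> R) : smooth_R f -> forall c, continuity_pt f c.
Proof.
move=> f_smooth c e e_gt0.
have [r [r_gt0 Hr]] := (f_smooth 0%nat : cont_Rm _) (fun _ => c) e e_gt0.
by exists r; split => // y [_ yc]; apply: (Hr (fun _ => y)); rewrite vnorm_vec1.
Qed.

Lemma uniform_trajectory_bound {n : nat} (g : vec n -> vec n) (h : R -> vec n)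
  (delta : R -> R -> R) (C eps0 R0 T : R) :
  (forall i, cont_Rm (fun y => g y i)) ->
  (forall i c, continuity_pt (fun t => h t i) c) ->
  0 < eps0 ->
  (forall eps, 0 < eps <= eps0 ->
     (forall c, continuity_pt (delta eps) c) /\
     (forall t, eps < Rabs t -> delta eps t = 0) /\
     (forall pr : Riemann_integrable (fun t => Rabs (delta eps t)) (- eps) eps,
        RiemannInt pr <= C)) ->
  0 <= R0 -> 1 <= T ->
  exists B E, 0 < E /\ forall eps, 0 < eps <= E -> forall x0 v0,
    sup_ball R0 x0 -> sup_ball R0 v0 ->
    forall X, solves_ivp g h (delta eps) x0 v0 X ->
    forall s, -T <= s <= T -> forall i, Rabs (X s i) <= B.
Proof.
move=> g_cont h_cont eps0_gt0 delta_ok R0_ge0 T_ge1.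
have [Hb [Hb_ge0 h_bound]] := segment_bound h (-T) T ltac:(lra) h_cont.
pose reach := R0 + 2 * T * (R0 + 2 * T * Hb).
have reach_ge0 : 0 <= reach by rewrite /reach; have := Rmult_le_pos (2 * T) Hb ltac:(lra) Hb_ge0; nra.
have [G [G_ge0 g_bound]] := compact_map_bounded _ _ (sup_ball_compact (reach + 1) ltac:(lra)) g_cont.
pose speed := R0 + 2 * T * Hb + G * C + Hb.
pose E := Rmin (Rmin eps0 (1 / 2)) (/ (4 * Rabs speed + 1)).
have E_gt0 : 0 < E.
  by rewrite /E; apply: Rmin_glb_lt; [apply: Rmin_glb_lt|apply: Rinv_0_lt_compat]; have := Rabs_pos speed; lra.
exists (reach + 1 + 2 * T * (speed + 2 * T * Hb)), E; split => // eps eps_in x0 v0 x0_in v0_in X.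
move=> [V [X_V_deriv [X_init V_init]]] s s_in i.
have [eps_le_eps0 eps_le_half] : eps <= eps0 /\ eps <= 1 / 2.
  by have := Rmin_l (Rmin eps0 (1 / 2)) (/ (4 * Rabs speed + 1)); have := Rmin_l eps0 (1 / 2);
    have := Rmin_r eps0 (1 / 2); rewrite -/E; lra.
have kick_small : speed * (2 * eps) <= 1 / 2.
  have := Rmin_r (Rmin eps0 (1 / 2)) (/ (4 * Rabs speed + 1)); rewrite -/E => E_le.
  have := Rmult_le_compat_l (4 * Rabs speed + 1) eps _ ltac:(have := Rabs_pos speed; lra) (Rle_trans _ _ _ (proj2 eps_in) E_le).
  rewrite Rinv_r; last by have := Rabs_pos speed; lra.
  by have := Rle_abs speed; have := Rabs_pos speed; nra.
have [delta_cont [delta_supp delta_int]] := delta_ok eps ltac:(lra).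
have [F [F_deriv F_bound]] := abs_primitive _ _ _ (proj1 eps_in) delta_cont delta_int.
apply: (trajectory_bound (fun t i => proj1 (X_V_deriv t i)) (fun t i => proj2 (X_V_deriv t i))
  X_init V_init (conj (proj1 eps_in) eps_le_half) T_ge1 R0_ge0 Hb_ge0 delta_supp
  (fun c c_in i => h_bound i c c_in) (fun i => conj (x0_in i) (v0_in i)) G_ge0
  (fun y y_in i => g_bound i y y_in) F_deriv F_bound kick_small s i s_in).
Qed.

Lemma split_lshift {a b : nat} (i : 'I_a) : split (lshift b i) = inl i.
Proof. exact: (unsplitK (inl i)). Qed.

Lemma split_rshift {a b : nat} (i : 'I_b) : split (rshift a i) = inr i.
Proof. exact: (unsplitK (inr i)). Qed.

Definition pack {n : nat} (x0 v0 : vec n) (t : R) : vec (n + n + 1) :=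
  fun k => match split k with
           | inl k' => match split k' with inl i => x0 i | inr i => v0 i end
           | inr _ => t
           end.

Lemma pack_p1 {n : nat} (x0 v0 : vec n) t : p1 (pack x0 v0 t) = x0.
Proof. by apply: functional_extensionality => i; rewrite /p1 /pack !split_lshift. Qed.

Lemma pack_p2 {n : nat} (x0 v0 : vec n) t : p2 (pack x0 v0 t) = v0.
Proof.
by apply: functional_extensionality => i; rewrite /p2 /pack split_lshift split_rshift.
Qed.

Lemma pack_p3 {n : nat} (x0 v0 : vec n) t : p3 (pack x0 v0 t) = t.
Proof. by rewrite /p3 /pack split_rshift. Qed.

Lemma sup_ball_pack {n : nat} (r : R) (x0 v0 : vec n) (t : R) :
  sup_ball r (pack x0 v0 t) -> [/\ sup_ball r x0, sup_ball r v0 & Rabs t <= r].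
Proof.
move=> packed; split => [j|j|].
- by have := packed (lshift 1 (lshift n j)); rewrite /pack !split_lshift.
- by have := packed (lshift 1 (rshift n j)); rewrite /pack split_lshift split_rshift.
- by have := packed (rshift (n + n) ord0); rewrite /pack split_rshift.
Qed.

Lemma sup_ball_split {n : nat} (r : R) (w : vec (n + n)) :
  sup_ball r w <-> sup_ball r (q1 w) /\ sup_ball r (q2 w).
Proof.
split => [w_in|[w1_in w2_in] j]; first by split => j; apply: w_in.
by rewrite -(splitK j); case: (split j) => k; [apply: w1_in | apply: w2_in].
Qed.

Lemma compact_triple_bounded {n : nat} (M : vec n -> vec n -> R -> Prop) :
  compact_Rm (fun w : vec (n + n + 1) => M (p1 w) (p2 w) (p3 w)) ->
  exists R1, 0 <= R1 /\ forall x0 v0 t, M x0 v0 t ->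
    [/\ sup_ball R1 x0, sup_ball R1 v0 & Rabs t <= R1].
Proof.
move=> M_compact; have [R1 [R1_ge0 M_bound]] := compact_map_bounded _ _ M_compact cont_Rm_coord.
exists R1; split => // x0 v0 t Mxt; apply: sup_ball_pack => j; apply: M_bound.
by rewrite pack_p1 pack_p2 pack_p3.
Qed.

Theorem proposition4p3 (n : nat) (g : vec n -> vec n) (h : R -> vec n)
  (delta : R -> R -> R) (x : R -> vec n -> vec n -> R -> vec n) :
  smooth_map g ->
  (forall i : 'I_n, smooth_R (fun t => h t i)) ->
  (forall eps, 0 < eps <= 1 -> smooth_R (delta eps)) ->
  (exists C, 0 < C /\ exists eps0, 0 < eps0 <= 1 /\
     forall eps, 0 < eps <= eps0 ->
       (forall t, eps < Rabs t -> delta eps t = 0) /\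
       (forall pr : Riemann_integrable (fun t => Rabs (delta eps t)) (- eps) eps,
          RiemannInt pr <= C)) ->
  asymptotic_solution g h delta x ->
  forall M : vec n -> vec n -> R -> Prop,
    compact_Rm (fun w : vec (n + n + 1) => M (p1 w) (p2 w) (p3 w)) ->
    exists CM, 0 < CM /\ exists eps1, 0 < eps1 <= 1 /\
      forall eps, 0 < eps <= eps1 ->
        forall x0 v0 t, M x0 v0 t -> vnorm (x eps x0 v0 t) <= CM.
Proof.
move=> g_smooth h_smooth delta_smooth [C [_ [eps0 [eps0_in delta_ok]]]] [_ x_asym] M M_compact.
have [R1 [R1_ge0 M_in]] := compact_triple_bounded M M_compact.
pose K (x0 v0 : vec n) := sup_ball R1 x0 /\ sup_ball R1 v0.
have [epsK [epsK_in x_sol]] := x_asym K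
  (compact_Rm_ext _ _ (sup_ball_split R1) (sup_ball_compact R1 R1_ge0)).
have [B [E [E_gt0 x_bound]]] := uniform_trajectory_bound g h delta C eps0 R1 (R1 + 1)
  (fun i => g_smooth i 0%nat) (fun i => smooth_R_continuous _ (h_smooth i)) (proj1 eps0_in)
  (fun eps eps_in => conj (smooth_R_continuous _ (delta_smooth eps ltac:(lra)))
     (delta_ok eps eps_in)) R1_ge0 ltac:(lra).
exists ((INR n + 1) * Rmax B 0 + 1); split; first by have := pos_INR n; have := Rmax_r B 0; nra.
exists (Rmin epsK E); split.
  by split; [apply: Rmin_glb_lt; lra | have := Rmin_l epsK E; lra].
move=> eps eps_in x0 v0 t /M_in [x0_in v0_in t_le].
have [eps_le_epsK eps_le_E] := conj (Rmin_l epsK E) (Rmin_r epsK E).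
have sol := x_sol x0 v0 eps (conj x0_in v0_in) ltac:(lra).
suff : vnorm (x eps x0 v0 t) <= (INR n + 1) * Rmax B 0 by lra.
apply: vnorm_le_sup => [|i]; first exact: Rmax_r.
apply: Rle_trans (Rmax_l B 0); apply: (x_bound eps _ x0 v0 x0_in v0_in _ sol); first lra.
by have := Rabs_le_inv t_le; lra.
Qed.
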